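(* Let $f:2^{\mathcal N}\to\mathbb R_{\ge0}$ be non-negative submodular and $\mathcal M=(\mathcal N,\mathcal I)$ a matroid of rank $k$, padded with dummy elements as described in the context. Consider the Smooth Residual Random Greedy algorithm (general matroid) with parameter $T$: $S_0=\emptyset$; for $i=1,\dots,T$, let $M_i$ be a base of $\mathcal M/S_{i-1}$ maximizing $\sum_{u\in M_i}[f(S_{i-1}\cup\{u\})-f(S_{i-1})]$; with probability $1-|S_{i-1}|/k$ let $u_i$ be a uniformly random element of $M_i$ and set $S_i=S_{i-1}\cup\{u_i\}$; otherwise set $S_i=S_{i-1}$. Then for every $i=1,\dots,T$, $$\mathbb E[f(S_i)]-\mathbb E[f(S_{i-1})]\ge\frac1k\,\mathbb E\big[f(O_{S_{i-1}}\cup S_{i-1})-f(S_{i-1})\big].$$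
   Context: A set function $f$ is submodular if $f(A\cup B)+f(A\cap B)\le f(A)+f(B)$ for all $A,B\subseteq\mathcal N$. For $S\in\mathcal I$, the contracted matroid $\mathcal M/S$ has ground set $\mathcal N\setminus S$, with $S'\subseteq\mathcal N\setminus S$ independent iff $S'\cup S\in\mathcal I$. Padding assumption: the ground set contains zero-contribution dummy elements (e.g., a parallel copy $u'$ of every original element $u$, a set being independent iff it contains at most one of $u,u'$ for each $u$ and its projection onto the original elements is independent, and $f$ depending only on the original elements of a set), so that for every $S\in\mathcal I$ one may fix $O_S$ to be a set $A$ maximizing $f(S\cup A)$ over independent sets $A$ of $\mathcal M/S$ which is moreover a base of $\mathcal M/S$ (so $S\cup O_S$ is a base of $\mathcal M$ and $|O_S|=k-|S|$). *)

From mathcomp Require Import all_boot all_order all_algebra.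
Set Implicit Arguments. Unset Strict Implicit. Unset Printing Implicit Defensive.
Import Order.TTheory GRing.Theory Num.Theory.
Local Open Scope ring_scope.

Definition is_matroid (T : finType) (indep : {set T} -> bool) : Prop :=
  [/\ indep set0,
      (forall A B : {set T}, A \subset B -> indep B -> indep A) &
      (forall A B : {set T}, indep A -> indep B -> (#|A| < #|B|)%N ->
         exists2 x, x \in B :\: A & indep (x |: A))].

Definition matroid_rank (T : finType) (indep : {set T} -> bool) (k : nat) : Prop :=
  (exists2 B : {set T}, indep B & #|B| = k) /\
  (forall A : {set T}, indep A -> (#|A| <= k)%N).

Definition contr_indep (T : finType) (indep : {set T} -> bool) (S A : {set T}) : bool :=
  [disjoint A & S] && indep (A :|: S).

Definition is_base (T : finType) (indep : {set T} -> bool) (B : {set T}) : Prop :=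
  indep B /\ (forall A : {set T}, indep A -> B \subset A -> A = B).

Definition submodular (T : finType) (R : realFieldType) (f : {set T} -> R) : Prop :=
  forall A B : {set T}, f (A :|: B) + f (A :&: B) <= f A + f B.

Definition nonneg_fun (T : finType) (R : realFieldType) (f : {set T} -> R) : Prop :=
  forall A : {set T}, 0 <= f A.

Definition marg (T : finType) (R : realFieldType) (f : {set T} -> R) (S : {set T}) (u : T) : R :=
  f (u |: S) - f S.

(* One step of Smooth Residual Random Greedy from current set S with selected base M
   (of M/S): probability of moving to S'. *)
Definition srrg_step (T : finType) (R : realFieldType) (k : nat)
    (M S S' : {set T}) : R :=
  (#|S|%:R / k%:R) * (S' == S)%:R
  + (1 - #|S|%:R / k%:R) *
      \sum_(u in M) (#|M|%:R)^-1 * (S' == u |: S)%:R.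

(* Distribution of S_i: Msel i S is the base M_{i+1} chosen at iteration i+1 when
   S_i = S. *)
Fixpoint srrg_dist {T : finType} {R : realFieldType} (k : nat)
    (Msel : nat -> {set T} -> {set T}) (i : nat) (S' : {set T}) : R :=
  match i with
  | 0 => (S' == set0)%:R
  | i'.+1 => \sum_(S : {set T}) srrg_dist k Msel i' S * @srrg_step T R k (Msel i' S) S S'
  end.

Definition srrg_E (T : finType) (R : realFieldType) (k : nat)
    (Msel : nat -> {set T} -> {set T}) (i : nat) (g : {set T} -> R) : R :=
  \sum_(S : {set T}) @srrg_dist T R k Msel i S * g S.

From mathcomp Require Import all_boot all_order all_algebra.
From mathcomp Require Import ring lra.
Set Implicit Arguments. Unset Strict Implicit. Unset Printing Implicit Defensive.
Import Order.TTheory GRing.Theory Num.Theory.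
Local Open Scope ring_scope.

(* Conditioned on S_{i-1} = S with S independent, M_i ∪ S is a base of the
   matroid, so |M_i| = k - |S| and the step adds each u ∈ M_i with probability
   (1 - |S|/k) / |M_i| = 1/k.  The expected gain is therefore (1/k) times the sum
   of the marginals over M_i, which by the choice of M_i is at least the sum of
   the marginals over the base O_S of M/S, and by submodularity that sum is at
   least f(O_S ∪ S) - f(S). *)

Section Submodular.

Variables (T : finType) (R : realFieldType) (f : {set T} -> R).
Hypothesis f_submod : submodular f.

Lemma marg_setU_le (S B : {set T}) (u : T) :
  u \notin B -> marg f (B :|: S) u <= marg f S u.
Proof.
move=> uNB; have := f_submod (u |: S) (B :|: S).
rewrite setUA [_ :|: B]setUAC -setUA setUid -setUIl.
by rewrite disjoint_setI0 ?disjoints1 // set0U /marg setUA; lra.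
Qed.

Lemma submodular_le_sum_marg (S O : {set T}) :
  f (O :|: S) - f S <= \sum_(u in O) marg f S u.
Proof.
rewrite -big_enum -{1}[O]set_enum; elim: (enum O) (enum_uniq O) => [|u s IH].
  by rewrite set_nil set0U big_nil subrr.
rewrite /= set_cons big_cons => /andP[uNs /IH le_s].
have := @marg_setU_le S [set:: s] u; rewrite inE => /(_ uNs).
rewrite -setUA /marg; lra.
Qed.

End Submodular.

Section Matroid.

Variables (T : finType) (indep : {set T} -> bool).

Lemma contr_base_setU (S M : {set T}) :
  is_base (contr_indep indep S) M -> is_base indep (M :|: S).
Proof.
case=> /andP[dMS iMS] maxM; split=> // A iA sMS_A.
have sSA : S \subset A := subset_trans (subsetUr M S) sMS_A.
have sMA : M \subset A := subset_trans (subsetUl M S) sMS_A.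
have AS_eq : (A :\: S) :|: S = A.
  apply/setP=> x; rewrite !inE.
  by case: (boolP (x \in S)) => [/(subsetP sSA) ->|]; rewrite ?orbT ?orbF.
rewrite -(maxM (A :\: S)) ?AS_eq //.
  by rewrite /contr_indep AS_eq iA andbT disjoints_subset setDE subsetIr.
by rewrite subsetD sMA.
Qed.

Hypothesis indep_matroid : is_matroid indep.

Lemma base_card k (B : {set T}) :
  matroid_rank indep k -> is_base indep B -> #|B| = k.
Proof.
have [_ _ exch] := indep_matroid.
case=> [[C iC cardC] rank_le] [iB maxB].
apply/eqP; rewrite eqn_leq rank_le //= leqNgt -cardC; apply/negP=> ltBC.
have [x /setDP[_ xNB] ixB] := exch B C iB iC ltBC.
by move: xNB; rewrite -(maxB _ ixB (subsetU1 x B)) setU11.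
Qed.

Lemma contr_base_card k (S M : {set T}) :
  matroid_rank indep k -> is_base (contr_indep indep S) M ->
  (#|M| + #|S|)%N = k.
Proof.
move=> rank_k baseM; have [/andP[dMS _] _] := baseM.
rewrite -(base_card rank_k (contr_base_setU baseM)).
by rewrite cardsU (disjoint_setI0 dMS) cards0 subn0.
Qed.

End Matroid.

Lemma sum_indicator (I : finType) (R : nzSemiRingType) (g : I -> R) (x : I) :
  \sum_(y : I) (y == x)%:R * g y = g x.
Proof.
rewrite (bigD1 x) //= eqxx mul1r big1 ?addr0 // => y /negbTE ->.
by rewrite mul0r.
Qed.

Section SmoothResidualRandomGreedy.

Variables (T : finType) (R : realFieldType) (k : nat).
Variable Msel : nat -> {set T} -> {set T}.

Local Notation step := (@srrg_step T R k).
Local Notation dist := (@srrg_dist T R k Msel).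

Lemma srrg_step_expect (M S : {set T}) (g : {set T} -> R) :
  \sum_S' step M S S' * g S' =
  #|S|%:R / k%:R * g S
  + (1 - #|S|%:R / k%:R) * (#|M|%:R^-1 * \sum_(u in M) g (u |: S)).
Proof.
under eq_bigr do rewrite /srrg_step mulrDl -!mulrA.
rewrite big_split /= -!mulr_sumr sum_indicator.
congr (_ + _ * _); first by rewrite mulrA.
rewrite (eq_bigr _ (fun S' _ => mulr_suml _ _ _ _)) exchange_big /= mulr_sumr.
apply: eq_bigr => u _.
by under eq_bigr do rewrite -mulrA; rewrite -mulr_sumr sum_indicator.
Qed.

Lemma srrg_step_expect_marg (M S : {set T}) (f : {set T} -> R) :
  (0 < k)%N -> (#|M| + #|S|)%N = k ->
  \sum_S' step M S S' * f S' = f S + k%:R^-1 * \sum_(u in M) marg f S u.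
Proof.
move=> k_gt0 card_MS; rewrite srrg_step_expect /marg sumrB sumr_const.
have k_neq0 : k%:R != 0 :> R by rewrite pnatr_eq0 -lt0n.
have [M_eq0 | M_gt0] := posnP #|M|.
  move: card_MS; rewrite M_eq0 add0n => ->.
  rewrite (cards0_eq M_eq0) !big_set0 divff // subrr mulr0n subr0.
  by rewrite !mul0r mulr0 mul1r !addr0.
have M_neq0 : #|M|%:R != 0 :> R by rewrite pnatr_eq0 -lt0n.
rewrite -card_MS natrD in k_neq0 *; rewrite -[f S *+ _]mulr_natr; field.
by rewrite k_neq0 M_neq0.
Qed.

Lemma srrg_E_succ i (g : {set T} -> R) :
  srrg_E k Msel i.+1 g = \sum_S dist i S * \sum_S' step (Msel i S) S S' * g S'.
Proof.
rewrite /srrg_E /=; under eq_bigr do rewrite mulr_suml.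
rewrite exchange_big; apply: eq_bigr => S _; rewrite mulr_sumr.
by apply: eq_bigr => S' _; rewrite mulrA.
Qed.

Lemma srrg_step_ge0 (M S S' : {set T}) : (#|S| <= k)%N -> 0 <= step M S S'.
Proof.
move=> le_Sk; rewrite /srrg_step.
apply: addr_ge0; apply: mulr_ge0; rewrite ?divr_ge0 ?ler0n //.
  have [->|k_gt0] := posnP k; first by rewrite invr0 mulr0 subr0.
  by rewrite subr_ge0 ler_pdivrMr ?ltr0n // mul1r ler_nat.
by apply: sumr_ge0 => u _; rewrite mulr_ge0 ?invr_ge0 ?ler0n.
Qed.

Variable indep : {set T} -> bool.
Hypotheses (indep_matroid : is_matroid indep) (rank_k : matroid_rank indep k).
Hypothesis Msel_base :
  forall i S, indep S -> is_base (contr_indep indep S) (Msel i S).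

Lemma srrg_step_indep (M S S' : {set T}) :
  contr_indep indep S M -> step M S S' != 0 -> indep S -> indep S'.
Proof.
have [_ indep_sub _] := indep_matroid.
case/andP=> _ iMS; rewrite /srrg_step.
have [-> //|neq] := eqVneq S' S; rewrite mulr0 add0r => step_neq0 _.
have [u uM /eqP ->] : exists2 u, u \in M & S' == u |: S.
  apply/exists_inP; apply: contraNT step_neq0 => /exists_inPn none.
  by rewrite big1 ?mulr0 // => u /none /negbTE ->; rewrite mulr0.
by apply: indep_sub iMS; rewrite setSU // sub1set.
Qed.

Lemma srrg_dist_ge0_indep i (S : {set T}) :
  0 <= dist i S /\ (dist i S != 0 -> indep S).
Proof.
have [indep0 _ _] := indep_matroid.
elim: i S => [|i IH] S /=.
  split; first exact: ler0n.
  by rewrite pnatr_eq0 eqb0 negbK => /eqP ->.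
have dist_supp S0 : dist i S0 != 0 -> 0 <= dist i S0 /\ indep S0.
  by move=> nz; have [ge0 /(_ nz)] := IH S0.
split.
  apply: sumr_ge0 => S0 _; have [->|/dist_supp[ge0 iS0]] := eqVneq (dist i S0) 0.
    by rewrite mul0r.
  by rewrite mulr_ge0 ?srrg_step_ge0 ?(rank_k.2 _ iS0).
apply: contraTT => NiS; rewrite negbK; apply/eqP/big1 => S0 _.
have [->|/dist_supp[_ iS0]] := eqVneq (dist i S0) 0.
  by rewrite mul0r.
have [contrM _] := Msel_base i iS0.
have [->|step_neq0] := eqVneq (step (Msel i S0) S0 S) 0; first by rewrite mulr0.
by rewrite (srrg_step_indep contrM step_neq0 iS0) in NiS.
Qed.

End SmoothResidualRandomGreedy.

Theorem lemma12 (T : finType) (R : realFieldType) (f : {set T} -> R)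
    (indep : {set T} -> bool) (k : nat) (O : {set T} -> {set T})
    (Msel : nat -> {set T} -> {set T}) (Tn : nat) :
  nonneg_fun f -> submodular f ->
  is_matroid indep -> matroid_rank indep k -> (0 < k)%N ->
  (* O_S: an optimal independent set of M/S which is a base of M/S *)
  (forall S, indep S ->
     is_base (contr_indep indep S) (O S) /\
     (forall A, contr_indep indep S A -> f (S :|: A) <= f (S :|: O S))) ->
  (* M_{i+1}: a base of M/S_i maximizing the sum of marginal gains *)
  (forall i S, indep S ->
     is_base (contr_indep indep S) (Msel i S) /\
     (forall B, is_base (contr_indep indep S) B ->
        \sum_(u in B) marg f S u <= \sum_(u in Msel i S) marg f S u)) ->
  forall i : nat, (1 <= i <= Tn)%N ->
    srrg_E k Msel i f - srrg_E k Msel i.-1 f >=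
    k%:R^-1 * srrg_E k Msel i.-1 (fun S => f (O S :|: S) - f S).
Proof.
move=> _ f_submod matroid rank_k k_gt0 O_base Msel_opt [//|i] _ /=.
have Msel_base i' S iS := (Msel_opt i' S iS).1.
rewrite srrg_E_succ /srrg_E -sumrB mulr_sumr; apply: ler_sum => S _.
have [d_ge0 d_indep] := srrg_dist_ge0_indep R matroid rank_k Msel_base i S.
have [->|/d_indep iS] := eqVneq (srrg_dist k Msel i S : R) 0.
  by rewrite !mul0r mulr0 subrr.
rewrite -mulrBr mulrCA ler_wpM2l //.
have card_MS := contr_base_card matroid rank_k (Msel_base i S iS).
rewrite srrg_step_expect_marg //.
rewrite addrAC subrr add0r ler_wpM2l ?invr_ge0 ?ler0n //.
apply: le_trans (submodular_le_sum_marg f_submod S (O S)) _.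
exact: (Msel_opt i S iS).2 _ (O_base S iS).1.
Qed.
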